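(* Consider the following two-period model. States $\omega_1,\omega_2\in\{0,1\}$ satisfy $\Pr[\omega_1=1]=\mu_0\in(0,1)$ and $\Pr[\omega_2=\omega\mid\omega_1=\omega]=\rho$ with $\rho\in(1/2,1)$. In each period $t$ a test may be taken at cost $k>0$ to the principal; a test reveals $\omega_t$, and if no test is taken $\omega_t$ is nevertheless revealed (for free) with probability $\pi\in(0,1)$; unrevealed states are recorded as the report $r_t=\varnothing$, and revealed states are recorded truthfully, $r_t=\omega_t$. A (baseline) mechanism consists of $\sigma_1\in\{0,1\}$ (whether to test in period 1), $\sigma_2:\{\varnothing,0,1\}\to\{0,1\}$ (whether to test in period 2 as a function of $r_1$) and $\hat x:\{\varnothing,0,1\}^2\to\{0,1\}$; testing occurs exactly when recommended. The principal solves $$\max_{(\sigma,\hat x)}\ \Pr_\sigma[\hat x(r_1,r_2)=\omega_2]-k\big(\sigma_1+\mathbb{E}_{\sigma_1}[\sigma_2(r_1)]\big),$$ where $\mathbb{E}_{\sigma_1}[\sigma_2(r_1)]=[\sigma_1+(1-\sigma_1)\pi][\mu_0\sigma_2(1)+(1-\mu_0)\sigma_2(0)]+(1-\sigma_1)(1-\pi)\sigma_2(\varnothing)$. Let $\kappa=k/(1-\pi)$ and $\mu_2(\varnothing)=\rho\mu_0+(1-\rho)(1-\mu_0)$. Then an optimal solution pairs the efficient assignment policy $\hat x^*(h_2)=\mathbb{1}[\mu_2(h_2)\ge 1/2]$ (where $\mu_2(h_2)$ is the posterior probability that $\omega_2=1$ given the reports $h_2=(r_1,r_2)$, required on all histories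 occurring with positive probability) with the testing policy $\sigma_1^*=0$ and: (i) if $\kappa\in(0,1-\rho]$: $\sigma_2^*(r_1)=1$ for all $r_1$; (ii) if $\kappa\in(1-\rho,\min\{\mu_2(\varnothing),1-\mu_2(\varnothing)\}]$: $\sigma_2^*(r_1)=\mathbb{1}[r_1=\varnothing]$; (iii) if $\kappa>\min\{\mu_2(\varnothing),1-\mu_2(\varnothing)\}$: $\sigma_2^*(r_1)=0$ for all $r_1$. Moreover, if $\kappa=0$, then always testing is optimal.
   Context: This is the ''baseline'' problem in which the principal directly controls testing and observes all revealed test results (the agent's incentives are ignored). $\mathbb{1}[\cdot]$ is the indicator function. *)

From HB Require Import structures.
From mathcomp Require Import all_boot all_order all_algebra.
Set Implicit Arguments. Unset Strict Implicit. Unset Printing Implicit Defensive.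
Import Order.TTheory GRing.Theory Num.Theory.
Local Open Scope ring_scope.

(* States are bool (false = 0, true = 1).  Reports are option bool:
   None = the empty report (unrevealed), Some w = revealed state w. *)

Section Model.
Variable R : realFieldType.
Variables (mu0 rho pi k : R).

Definition prior (w : bool) : R := if w then mu0 else 1 - mu0.
Definition trans (w1 w2 : bool) : R := if w1 == w2 then rho else 1 - rho.
Definition rep_prob (test : bool) (w : bool) (r : option bool) : R :=
  match r with
  | None => if test then 0 else 1 - pi
  | Some w' => if w' == w then (if test then 1 else pi) else 0
  end.

Definition joint (s1 : bool) (s2 : option bool -> bool)
  (w1 w2 : bool) (r1 r2 : option bool) : R :=
  prior w1 * trans w1 w2 * rep_prob s1 w1 r1 * rep_prob (s2 r1) w2 r2.

Definition hist_prob s1 s2 (r1 r2 : option bool) : R :=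
  \sum_(w1 : bool) \sum_(w2 : bool) joint s1 s2 w1 w2 r1 r2.

Definition mu2 s1 s2 (r1 r2 : option bool) : R :=
  (\sum_(w1 : bool) joint s1 s2 w1 true r1 r2) / hist_prob s1 s2 r1 r2.

Definition efficient s1 s2 (x : option bool -> option bool -> bool) : Prop :=
  forall r1 r2, 0 < hist_prob s1 s2 r1 r2 ->
    x r1 r2 = (1 / 2 <= mu2 s1 s2 r1 r2).

Definition accuracy s1 s2 (x : option bool -> option bool -> bool) : R :=
  \sum_(w1 : bool) \sum_(w2 : bool) \sum_(r1 : option bool) \sum_(r2 : option bool)
    joint s1 s2 w1 w2 r1 r2 * (x r1 r2 == w2)%:R.

Definition exp_test2 (s1 : bool) (s2 : option bool -> bool) : R :=
  (s1%:R + (1 - s1%:R) * pi) *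
    (mu0 * (s2 (Some true))%:R + (1 - mu0) * (s2 (Some false))%:R)
  + (1 - s1%:R) * (1 - pi) * (s2 None)%:R.

Definition value s1 s2 x : R :=
  accuracy s1 s2 x - k * (s1%:R + exp_test2 s1 s2).

Definition optimal s1 s2 x : Prop :=
  forall (s1' : bool) (s2' : option bool -> bool)
         (x' : option bool -> option bool -> bool),
    value s1' s2' x' <= value s1 s2 x.

End Model.

From HB Require Import structures.
From mathcomp Require Import all_boot all_order all_algebra.
From mathcomp Require Import ring lra.
Import Order.TTheory GRing.Theory Num.Theory.
Set Implicit Arguments. Unset Strict Implicit.
Local Open Scope ring_scope.

(* The accuracy of any assignment is at most the sum over histories h2 of
   max(Pr[h2, w2 = 1], Pr[h2, w2 = 0]), with equality for the efficient assignment,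
   so testing policies can be compared by this bound minus the testing cost.  The
   bound is explicit: given r1, the more likely period-2 state has probability rho
   after a revealed state and max(mu2(empty), 1 - mu2(empty)) after an empty report,
   and a period-2 test raises the accuracy from pi + (1 - pi) q to 1 at cost k.
   Testing in period 1 costs k for information that is revealed for free with
   probability pi, so it is dominated; the three regimes are the comparisons of
   1 - k with pi + (1 - pi) q, i.e. of kappa with 1 - q. *)

Lemma big_option (V : nmodType) (T : finType) (F : option T -> V) :
  \sum_(o : option T) F o = F None + \sum_(t : T) F (Some t).
Proof.
rewrite (bigD1 None) //=; congr (_ + _).
rewrite (reindex_omap Some idfun) //=; last by case.
by apply: eq_bigl => t; rewrite eqxx.
Qed.

Lemma max_posterior_choice (R : realFieldType) (a b : R) (c : bool) :
  0 <= a -> 0 <= b -> (0 < a + b -> c = (1 / 2 <= a / (a + b))) ->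
  (if c then a else b) = Num.max a b.
Proof.
move=> a_ge0 b_ge0 c_post.
have := addr_ge0 a_ge0 b_ge0; rewrite le_eqVlt => /predU1P[ab0 | ab_gt0].
  have [-> ->] : a = 0 /\ b = 0 by split; lra.
  by rewrite maxxx if_same.
have -> : c = (b <= a).
  by rewrite c_post // ler_pdivlMr //; apply/idP/idP; lra.
by case: leP.
Qed.

Section Baseline.
Variables (R : realFieldType) (mu0 rho pi k : R).
Hypotheses (mu0_ge0 : 0 <= mu0) (mu0_le1 : mu0 <= 1).
Hypotheses (rho_ge1_2 : 1 / 2 <= rho) (rho_le1 : rho <= 1).
Hypotheses (pi_ge0 : 0 <= pi) (pi_le1 : pi <= 1) (k_ge0 : 0 <= k).

Local Notation joint := (joint mu0 rho pi).
Local Notation hist_prob := (hist_prob mu0 rho pi).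
Local Notation accuracy := (accuracy mu0 rho pi).
Local Notation efficient := (efficient mu0 rho pi).
Local Notation value := (value mu0 rho pi k).
Local Notation optimal := (optimal mu0 rho pi k).

Definition mu2_empty : R := rho * mu0 + (1 - rho) * (1 - mu0).

Definition joint_r1_w2 (s1 : bool) (r1 : option bool) (w2 : bool) : R :=
  \sum_(w1 : bool) prior mu0 w1 * trans rho w1 w2 * rep_prob pi s1 w1 r1.

Definition hist_state_prob s1 s2 (r1 r2 : option bool) (w2 : bool) : R :=
  \sum_(w1 : bool) joint s1 s2 w1 w2 r1 r2.

Lemma hist_state_probE s1 s2 r1 r2 w2 :
  hist_state_prob s1 s2 r1 r2 w2 = joint_r1_w2 s1 r1 w2 * rep_prob pi (s2 r1) w2 r2.
Proof. by rewrite /hist_state_prob /joint_r1_w2 big_distrl. Qed.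

Lemma hist_probE s1 s2 r1 r2 :
  hist_prob s1 s2 r1 r2 =
  hist_state_prob s1 s2 r1 r2 true + hist_state_prob s1 s2 r1 r2 false.
Proof. by rewrite /hist_prob exchange_big big_bool. Qed.

Lemma accuracyE s1 s2 x :
  accuracy s1 s2 x = \sum_(r1 : option bool) \sum_(r2 : option bool)
                        hist_state_prob s1 s2 r1 r2 (x r1 r2).
Proof.
rewrite /accuracy exchange_big /=.
under eq_bigr => w2 _ do rewrite exchange_big /=.
under eq_bigr => w2 _ do under eq_bigr => r1 _ do rewrite exchange_big /=.
rewrite exchange_big; apply: eq_bigr => r1 _; rewrite exchange_big.
apply: eq_bigr => r2 _; rewrite big_bool /hist_state_prob -!big_distrl /=.
by case: (x r1 r2); rewrite /= mulr1 mulr0 ?addr0 ?add0r.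
Qed.

Definition best_accuracy s1 s2 : R :=
  \sum_(r1 : option bool) \sum_(r2 : option bool)
    Num.max (hist_state_prob s1 s2 r1 r2 true) (hist_state_prob s1 s2 r1 r2 false).

Lemma accuracy_le_best s1 s2 x : accuracy s1 s2 x <= best_accuracy s1 s2.
Proof.
rewrite accuracyE; apply: ler_sum => r1 _; apply: ler_sum => r2 _.
by case: (x r1 r2); rewrite le_max lexx ?orbT.
Qed.

Lemma prior_ge0 w : 0 <= prior mu0 w.
Proof. by rewrite /prior; case: w; rewrite ?subr_ge0. Qed.

Lemma rho_ge0 : 0 <= rho.
Proof. by have := rho_ge1_2; lra. Qed.

Lemma trans_ge0 w1 w2 : 0 <= trans rho w1 w2.
Proof. by rewrite /trans; case: (w1 == w2); rewrite ?subr_ge0 ?rho_ge0. Qed.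

Lemma rep_prob_ge0 t w r : 0 <= rep_prob pi t w r.
Proof.
by rewrite /rep_prob; case: r => [w'|]; [case: (w' == w)|]; case: t; rewrite ?subr_ge0.
Qed.

Lemma hist_state_prob_ge0 s1 s2 r1 r2 w2 : 0 <= hist_state_prob s1 s2 r1 r2 w2.
Proof.
apply: sumr_ge0 => w1 _.
by rewrite !mulr_ge0 ?prior_ge0 ?trans_ge0 ?rep_prob_ge0.
Qed.

Lemma accuracy_efficient s1 s2 x :
  efficient s1 s2 x -> accuracy s1 s2 x = best_accuracy s1 s2.
Proof.
move=> x_eff; rewrite accuracyE; apply: eq_bigr => r1 _; apply: eq_bigr => r2 _.
have -> : hist_state_prob s1 s2 r1 r2 (x r1 r2) =
  if x r1 r2 then hist_state_prob s1 s2 r1 r2 true else hist_state_prob s1 s2 r1 r2 false.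
  by case: (x r1 r2).
apply: max_posterior_choice; rewrite ?hist_state_prob_ge0 // -hist_probE.
exact: x_eff.
Qed.

(* [q] is the conditional probability of the more likely period-2 state given r1. *)
Definition period2_accuracy (t : bool) (q : R) : R :=
  if t then 1 else pi + (1 - pi) * q.

Lemma sum_max_rep_prob t c q : 0 <= c -> 0 <= q <= 1 ->
  \sum_(r2 : option bool)
    Num.max (c * q * rep_prob pi t true r2) (c * (1 - q) * rep_prob pi t false r2)
  = c * period2_accuracy t (Num.max q (1 - q)).
Proof.
move=> c_ge0 /andP[q_ge0 q_le1].
have cq_ge0 : 0 <= c * q by rewrite mulr_ge0.
have cq'_ge0 : 0 <= c * (1 - q) by rewrite mulr_ge0 ?subr_ge0.
rewrite big_option big_bool /rep_prob /period2_accuracy; case: t => /=.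
  by rewrite !mulr0 !mulr1 maxxx (max_l cq_ge0) (max_r cq'_ge0); ring.
rewrite !mulr0 [Num.max _ 0]max_l ?mulr_ge0 // [Num.max 0 _]max_r ?mulr_ge0 ?subr_ge0 //.
rewrite [c * q * (1 - pi)]mulrAC [c * (1 - q) * (1 - pi)]mulrAC -maxr_pMr; first by ring.
by rewrite mulr_ge0 ?subr_ge0.
Qed.

Lemma trans_false w : trans rho w false = 1 - trans rho w true.
Proof. by rewrite /trans; case: w => /=; ring. Qed.

Lemma max_trans w : Num.max (trans rho w true) (1 - trans rho w true) = rho.
Proof.
by rewrite /trans; case: w => /=; [rewrite max_l | rewrite max_r]; rewrite ?opprB ?addrA;
  have := rho_ge1_2; lra.
Qed.

Lemma mu2_empty_ge0 : 0 <= mu2_empty.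
Proof. by rewrite addr_ge0 ?mulr_ge0 ?subr_ge0 ?rho_ge0. Qed.

Lemma mu2_empty_le1 : mu2_empty <= 1.
Proof.
rewrite -subr_ge0 (_ : 1 - mu2_empty = rho * (1 - mu0) + (1 - rho) * mu0).
  by rewrite addr_ge0 ?mulr_ge0 ?subr_ge0 ?rho_ge0.
by rewrite /mu2_empty; ring.
Qed.

Lemma joint_r1_w2_revealed s1 w w2 :
  joint_r1_w2 s1 (Some w) w2 = prior mu0 w * (if s1 then 1 else pi) * trans rho w w2.
Proof. by rewrite /joint_r1_w2 big_bool /rep_prob; case: w s1 => [] [] /=; ring. Qed.

Lemma joint_r1_w2_empty s1 w2 :
  joint_r1_w2 s1 None w2 =
  (if s1 then 0 else 1 - pi) * (if w2 then mu2_empty else 1 - mu2_empty).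
Proof.
rewrite /joint_r1_w2 big_bool /rep_prob /prior /trans /mu2_empty.
by case: s1 w2 => [] [] /=; ring.
Qed.

Lemma best_accuracy_revealed s1 s2 w :
  \sum_(r2 : option bool) Num.max (hist_state_prob s1 s2 (Some w) r2 true)
                                  (hist_state_prob s1 s2 (Some w) r2 false)
  = prior mu0 w * (if s1 then 1 else pi) * period2_accuracy (s2 (Some w)) rho.
Proof.
rewrite -(max_trans w) -sum_max_rep_prob; last first.
- by rewrite trans_ge0 -subr_ge0 -trans_false trans_ge0.
- by rewrite mulr_ge0 ?prior_ge0 //; case: s1.
by apply: eq_bigr => r2 _; rewrite !hist_state_probE !joint_r1_w2_revealed trans_false.
Qed.

Lemma best_accuracy_empty s1 s2 :
  \sum_(r2 : option bool) Num.max (hist_state_prob s1 s2 None r2 true)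
                                  (hist_state_prob s1 s2 None r2 false)
  = (if s1 then 0 else 1 - pi) *
    period2_accuracy (s2 None) (Num.max mu2_empty (1 - mu2_empty)).
Proof.
rewrite -sum_max_rep_prob; last first.
- by rewrite mu2_empty_ge0 mu2_empty_le1.
- by case: s1; rewrite ?subr_ge0.
by apply: eq_bigr => r2 _; rewrite !hist_state_probE !joint_r1_w2_empty.
Qed.

Lemma best_accuracyE s1 s2 :
  best_accuracy s1 s2 =
  (if s1 then 1 else pi) * (mu0 * period2_accuracy (s2 (Some true)) rho
                            + (1 - mu0) * period2_accuracy (s2 (Some false)) rho)
  + (if s1 then 0 else 1 - pi) *
    period2_accuracy (s2 None) (Num.max mu2_empty (1 - mu2_empty)).
Proof.
rewrite /best_accuracy big_option big_bool best_accuracy_empty !best_accuracy_revealed /=.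
ring.
Qed.

Definition best_value s1 s2 : R :=
  best_accuracy s1 s2 - k * (s1%:R + exp_test2 mu0 pi s1 s2).

Lemma value_le_best s1 s2 x : value s1 s2 x <= best_value s1 s2.
Proof. by rewrite lerD2r accuracy_le_best. Qed.

Lemma value_efficient s1 s2 x :
  efficient s1 s2 x -> value s1 s2 x = best_value s1 s2.
Proof. by move=> x_eff; rewrite /value accuracy_efficient. Qed.

Lemma optimal_of_best s1 s2 x : efficient s1 s2 x ->
  (forall s1' s2', best_value s1' s2' <= best_value s1 s2) -> optimal s1 s2 x.
Proof.
move=> x_eff best_max s1' s2' x'; rewrite (value_efficient x_eff).
exact: le_trans (value_le_best _ _ x') (best_max _ _).
Qed.

Definition continuation (t : bool) (q : R) : R := period2_accuracy t q - k * t%:R.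

Lemma best_valueE s1 s2 :
  best_value s1 s2 =
  if s1 then mu0 * continuation (s2 (Some true)) rho
             + (1 - mu0) * continuation (s2 (Some false)) rho - k
  else pi * (mu0 * continuation (s2 (Some true)) rho
             + (1 - mu0) * continuation (s2 (Some false)) rho)
       + (1 - pi) * continuation (s2 None) (Num.max mu2_empty (1 - mu2_empty)).
Proof.
rewrite /best_value best_accuracyE /exp_test2 /continuation.
by case: s1 (s2 None) (s2 (Some true)) (s2 (Some false)) => [] [] [] [] /=; ring.
Qed.

Lemma max_mu2_empty_le_rho : Num.max mu2_empty (1 - mu2_empty) <= rho.
Proof.
have rho2_ge0 : 0 <= 2 * rho - 1 by have := rho_ge1_2; lra.
have mu0'_ge0 : 0 <= 1 - mu0 by rewrite subr_ge0.
have := mulr_ge0 rho2_ge0 mu0_ge0; have := mulr_ge0 rho2_ge0 mu0'_ge0.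
by rewrite ge_max /mu2_empty => ? ?; apply/andP; split; lra.
Qed.

Lemma continuation_le1 t q : q <= 1 -> continuation t q <= 1.
Proof.
move=> q_le1; rewrite /continuation /period2_accuracy; case: t => /=.
  by have := k_ge0; lra.
have pi'_ge0 : 0 <= 1 - pi by rewrite subr_ge0.
by have := ler_wpM2l pi'_ge0 q_le1; lra.
Qed.

Lemma best_value_le s1 s2 s2' :
  (forall t, continuation t rho <= continuation (s2' (Some true)) rho) ->
  (forall t, continuation t rho <= continuation (s2' (Some false)) rho) ->
  (forall t, continuation t (Num.max mu2_empty (1 - mu2_empty)) <=
             continuation (s2' None) (Num.max mu2_empty (1 - mu2_empty))) ->
  best_value s1 s2 <= best_value false s2'.
Proof.
move=> maxT maxF maxN; rewrite !best_valueE.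
set cT := continuation (s2' (Some true)) rho.
set cF := continuation (s2' (Some false)) rho.
set cN := continuation (s2' None) _.
have pi'_ge0 : 0 <= 1 - pi by rewrite subr_ge0.
have mu0'_ge0 : 0 <= 1 - mu0 by rewrite subr_ge0.
have le_revealed : mu0 * continuation (s2 (Some true)) rho
    + (1 - mu0) * continuation (s2 (Some false)) rho <= mu0 * cT + (1 - mu0) * cF.
  by rewrite lerD // ler_wpM2l.
case: s1; last by rewrite lerD // ler_wpM2l.
have revealed_le1 : mu0 * cT + (1 - mu0) * cF <= 1.
  have := ler_wpM2l mu0_ge0 (continuation_le1 (s2' (Some true)) rho_le1).
  have := ler_wpM2l mu0'_ge0 (continuation_le1 (s2' (Some false)) rho_le1).
  by rewrite -/cT -/cF; lra.
have cN_ge : 1 - k <= cN by have := maxN true; rewrite {1}/continuation /= mulr1.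
have := ler_wpM2l pi'_ge0 cN_ge; have := mulr_ge0 pi_ge0 k_ge0.
have : 0 <= 1 - (mu0 * cT + (1 - mu0) * cF) by rewrite subr_ge0.
by move/(mulr_ge0 pi'_ge0); lra.
Qed.

Lemma continuation_le_test q : pi < 1 ->
  (continuation false q <= continuation true q) = (k / (1 - pi) <= 1 - q).
Proof.
move=> pi_lt1; rewrite /continuation /period2_accuracy /= mulr0 subr0 mulr1.
by rewrite ler_pdivrMr ?subr_gt0 //; apply/idP/idP; lra.
Qed.

Lemma continuation_le_best t q : pi < 1 ->
  continuation t q <= continuation (k / (1 - pi) <= 1 - q) q.
Proof.
move=> pi_lt1; rewrite -continuation_le_test //.
by case: t; case: (leP (continuation false q) (continuation true q)) => // /ltW.
Qed.

Lemma optimal_without_first_test s2 x : pi < 1 -> efficient false s2 x ->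
  s2 (Some true) = (k / (1 - pi) <= 1 - rho) ->
  s2 (Some false) = (k / (1 - pi) <= 1 - rho) ->
  s2 None = (k / (1 - pi) <= 1 - Num.max mu2_empty (1 - mu2_empty)) ->
  optimal false s2 x.
Proof.
move=> pi_lt1 x_eff s2T s2F s2N; apply: optimal_of_best => // s1' s2'.
by apply: best_value_le => t; rewrite ?s2T ?s2F ?s2N continuation_le_best.
Qed.

Lemma optimal_always_test x : k = 0 ->
  efficient true (fun _ => true) x -> optimal true (fun _ => true) x.
Proof.
move=> k0 x_eff; apply: optimal_of_best => // s1' s2'.
have -> : best_value true (fun _ => true) = best_value false (fun _ => true).
  by rewrite !best_valueE /continuation /= k0; ring.
have max_le1 := le_trans max_mu2_empty_le_rho rho_le1.
apply: best_value_le => t; rewrite [X in _ <= X]/continuation /= k0 mul0r subr0;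
  exact: continuation_le1.
Qed.

End Baseline.

Theorem proposition1 (R : realFieldType) (mu0 rho pi k : R) :
  0 < mu0 < 1 -> 1 / 2 < rho < 1 -> 0 < pi < 1 -> 0 <= k ->
  let kappa := k / (1 - pi) in
  let m2 := rho * mu0 + (1 - rho) * (1 - mu0) in
  (* (i) *)
  (0 < kappa <= 1 - rho ->
     forall x, efficient mu0 rho pi false (fun _ => true) x ->
       optimal mu0 rho pi k false (fun _ => true) x) /\
  (* (ii) *)
  (1 - rho < kappa <= Num.min m2 (1 - m2) ->
     forall x, efficient mu0 rho pi false (fun r1 => r1 == None) x ->
       optimal mu0 rho pi k false (fun r1 => r1 == None) x) /\
  (* (iii) *)
  (Num.min m2 (1 - m2) < kappa ->
     forall x, efficient mu0 rho pi false (fun _ => false) x ->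
       optimal mu0 rho pi k false (fun _ => false) x) /\
  (* kappa = 0: always testing *)
  (kappa = 0 ->
     forall x, efficient mu0 rho pi true (fun _ => true) x ->
       optimal mu0 rho pi k true (fun _ => true) x).
Proof.
move=> /andP[mu0_gt0 mu0_lt1] /andP[rho_gt1_2 rho_lt1] /andP[pi_gt0 pi_lt1] k_ge0.
have [mu0_ge0 mu0_le1] := (ltW mu0_gt0, ltW mu0_lt1).
have [rho_ge1_2 rho_le1] := (ltW rho_gt1_2, ltW rho_lt1).
have [pi_ge0 pi_le1] := (ltW pi_gt0, ltW pi_lt1).
move=> kappa m2; rewrite /kappa minr_to_max [m2 + _]addrC subrK.
have M_le_rho : Num.max m2 (1 - m2) <= rho by apply: max_mu2_empty_le_rho.
have rho_le_M : 1 - rho <= 1 - Num.max m2 (1 - m2) by rewrite lerD2l lerN2.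
split; [|split; [|split]].
- move=> /andP[_ k_le] x x_eff; have k_le_M := le_trans k_le rho_le_M.
  exact: optimal_without_first_test.
- move=> /andP[k_gt k_le] x x_eff.
  by apply: optimal_without_first_test => //=; rewrite leNgt k_gt.
- move=> k_gt x x_eff; have k_gt_rho := le_lt_trans rho_le_M k_gt.
  by apply: optimal_without_first_test => //=; rewrite leNgt ?k_gt ?k_gt_rho.
- move=> /eqP; rewrite mulf_eq0 invr_eq0 subr_eq0 => /orP[/eqP k0 | /eqP pi1].
    by move=> x; apply: optimal_always_test.
  by move: pi_lt1; rewrite -pi1 ltxx.
Qed.
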